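(* Let $\lambda$ be a partition and $T$ an $\mathbb{N}$-tableau of shape $\lambda$. Consider any ordering $b_1,\ldots,b_r$ of the boxes of $\lambda$ that is a linear extension of the poset $P_\lambda$ (where $(i,j)\le(k,l)$ iff $i\le k$ and $j\le l$), and let $T_s$ denote the restriction of $T$ to the boxes $b_1,\dots,b_s$ (so each $T_s$ is obtained from $T_{s-1}$ by adding the corner box $b_s$ with its entry from $T$). Starting from $\widehat{T_0}=\emptyset$ and applying the toggle step described in the context to pass from $\widehat{T_{s-1}}$ to $\widehat{T_s}$ for $s=1,\dots,r$, the resulting final tableau $\widehat{T_r}$ does not depend on the choice of linear extension. Thus the map $T\mapsto \widehat{T}$ is well defined.
   Context: Partitions are drawn in English notation with matrix coordinates: the box in row $i$ and column $j$ is $(i,j)$, and $(1,1)$ is the upper-left box. An $\mathbb{N}$-tableau of shape $\lambda$ is an assignment of a nonnegative integer to each box of $\lambda$. A corner box of a partition is a box $(i,j)$ such that neither $(i+1,j)$ nor $(i,j+1)$ is a box. Toggle step: Suppose $T'$ is obtained from an $\mathbb{N}$-tableau $T$ by adding a box $(i,j)$ (which is a corner box of $\mathrm{sh}(T')$) with entry $x$, and $\widehat{T}$ is a given $\mathbb{N}$-tableau of shape $\mathrm{sh}(T)$. For $k\ge1$ let $\beta_k$ be the entry of $\widehat{T}$ at $(i-k,j-k)$, $\gamma_k$ the entry at $(i-k+1,j-k)$ and $\alpha_k$ the entry at $(i-k,j-k+1)$, each taken to be $0$ if the corresponding box is not a box of $\mathrm{sh}(T)$ (in particular if a coordinate is nonpositive).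 Then $\widehat{T'}$ is the $\mathbb{N}$-tableau of shape $\mathrm{sh}(T')$ that agrees with $\widehat{T}$ except that for each $1\le k<\min(i,j)$ the entry at $(i-k,j-k)$ is replaced by $\max(\alpha_{k+1},\gamma_{k+1})+\min(\alpha_k,\gamma_k)-\beta_k$, and the entry at the new box $(i,j)$ is $\max(\alpha_1,\gamma_1)+x$. *)

From HB Require Import structures.
From mathcomp Require Import all_boot all_order all_algebra.
Set Implicit Arguments. Unset Strict Implicit. Unset Printing Implicit Defensive.
Import Order.TTheory GRing.Theory Num.Theory.

(* Boxes (i,j) in matrix coordinates, 1-indexed: (1,1) is the upper-left box. *)
Definition box := (nat * nat)%type.

Definition is_partition (la : seq nat) : bool :=
  sorted geq la && all (fun m => 0 < m) la.

Definition in_shape (la : seq nat) (b : box) : bool :=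
  [&& 0 < b.1, b.1 <= size la, 0 < b.2 & b.2 <= nth 0 la b.1.-1].

Definition box_le (b c : box) : bool := (b.1 <= c.1) && (b.2 <= c.2).

Definition linear_extension (la : seq nat) (bs : seq box) : Prop :=
  [/\ uniq bs,
      (forall b, (b \in bs) = in_shape la b) &
      (forall s t, s < size bs -> t < size bs ->
         box_le (nth (0,0) bs s) (nth (0,0) bs t) -> s <= t)].

(* N-tableaux are functions box -> nat (only the values on the shape matter).
   The hat-tableaux are stored as functions box -> int (only the values on the
   current shape matter; integer values avoid any truncated subtraction). *)

(* The toggle step: S is the list of boxes of sh(T) (so sh(T') = S ++ [b]),
   Th is hat T, b = (i,j) the new box with entry x. *)
Definition toggle (S : seq box) (Th : box -> int) (b : box) (x : nat) : box -> int :=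
  let e p := if p \in S then Th p else 0%R in
  let i := b.1 in let j := b.2 in
  let alpha k := e (i - k, (j - k).+1) in
  let gamma k := e ((i - k).+1, j - k) in
  let beta  k := e (i - k, j - k) in
  fun p =>
    if p == b then (Num.max (alpha 1) (gamma 1) + x%:Z)%R
    else if [&& 0 < p.1, p.1 < i, 0 < p.2, p.2 < j & i - p.1 == j - p.2] then
      let k := i - p.1 in
      (Num.max (alpha k.+1) (gamma k.+1) + Num.min (alpha k) (gamma k) - beta k)%R
    else Th p.

Fixpoint hat_aux (T : box -> nat) (S : seq box) (Th : box -> int) (bs : seq box)
  : box -> int :=
  match bs with
  | [::] => Th
  | b :: bs' => hat_aux T (rcons S b) (toggle S Th b (T b)) bs'
  end.

Definition hat_along (T : box -> nat) (bs : seq box) : box -> int :=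
  hat_aux T [::] (fun _ => 0%R) bs.

From mathcomp Require Import all_boot all_order all_algebra.
From mathcomp Require Import zify.
Import Order.TTheory GRing.Theory Num.Theory.
Set Implicit Arguments. Unset Strict Implicit.

(* The toggle at a box b = (i,j) overwrites only b and the boxes strictly
   up-left of b on its diagonal, and it reads the current hat-tableau only at
   boxes (i',j') <= (i,j) with |(i - i') - (j - j')| <= 1.  If b and c are
   incomparable in P_la, neither of these two regions for b meets the written
   region for c, so the toggles at b and c commute.  Two linear extensions
   differ by a sequence of such commutations: moving the first box of one
   extension to the front of the other only passes it over boxes that are
   incomparable to it. *)

Definition toggle_with (E Th : box -> int) (b : box) (x : nat) : box -> int :=
  let i := b.1 in let j := b.2 in
  let alpha k := E (i - k, (j - k).+1) in
  let gamma k := E ((i - k).+1, j - k) in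
  let beta  k := E (i - k, j - k) in
  fun p =>
    if p == b then (Num.max (alpha 1) (gamma 1) + x%:Z)%R
    else if [&& 0 < p.1, p.1 < i, 0 < p.2, p.2 < j & i - p.1 == j - p.2] then
      let k := i - p.1 in
      (Num.max (alpha k.+1) (gamma k.+1) + Num.min (alpha k) (gamma k) - beta k)%R
    else Th p.

Definition entry (S : seq box) (Th : box -> int) (q : box) : int :=
  if q \in S then Th q else 0%R.

Lemma toggleE S Th b x : toggle S Th b x =1 toggle_with (entry S Th) Th b x.
Proof. by []. Qed.

Definition pos_box (b : box) := (0 < b.1) && (0 < b.2).

Definition toggle_writes (b p : box) :=
  (p == b) || [&& 0 < p.1, p.1 < b.1, 0 < p.2, p.2 < b.2 & b.1 - p.1 == b.2 - p.2].

Definition toggle_reads (b q : box) :=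
  [&& q.1 <= b.1, q.2 <= b.2, b.1 - q.1 <= (b.2 - q.2).+1 & b.2 - q.2 <= (b.1 - q.1).+1].

Lemma toggle_with_unwritten E Th b x p :
  ~~ toggle_writes b p -> toggle_with E Th b x p = Th p.
Proof. by rewrite /toggle_with /= => /norP [/negbTE -> /negbTE ->]. Qed.

Lemma toggle_with_ext E1 E2 Th1 Th2 b x p :
  E1 =1 E2 -> Th1 p = Th2 p -> toggle_with E1 Th1 b x p = toggle_with E2 Th2 b x p.
Proof. by move=> eqE eqTh; rewrite /toggle_with /= !eqE eqTh. Qed.

(* The hypothesis [pos_box b] is needed: for b = (i,0) truncated subtraction
   makes the toggle read (i-1,1), which lies outside [toggle_reads b]. *)
Lemma toggle_with_local E1 E2 Th1 Th2 b x p : pos_box b ->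
  {in toggle_reads b, E1 =1 E2} -> Th1 p = Th2 p ->
  toggle_with E1 Th1 b x p = toggle_with E2 Th2 b x p.
Proof.
move=> /andP [b1 b2] eqE eqTh; rewrite /toggle_with /=.
case: eqP => _.
  by rewrite !eqE //; apply/and4P; split=> /=; lia.
case: ifP => // /and5P [h1 h2 h3 h4 /eqP h5].
by rewrite !eqE //; apply/and4P; split=> /=; lia.
Qed.

Lemma toggle_writes_reads b p : toggle_writes b p -> toggle_reads b p.
Proof.
case/orP => [/eqP ->|/and5P [h1 h2 h3 h4 /eqP h5]]; apply/and4P; split; lia.
Qed.

Lemma incomparable_reads_unwritten b c q :
  ~~ box_le c b -> ~~ box_le b c -> toggle_reads b q -> ~~ toggle_writes c q.
Proof.
rewrite /box_le !negb_and -!ltnNge => cb bc /and4P [r1 r2 r3 r4].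
apply/negP => /orP [/eqP Eq|/and5P [h1 h2 h3 h4 /eqP h5]].
  by subst q; case/orP: cb; lia.
by case/orP: cb => ?; case/orP: bc => ?; lia.
Qed.

Section IncomparableToggles.

Variables (S : seq box) (Th : box -> int) (b c : box) (xb xc : nat).
Hypotheses (pos_b : pos_box b) (pos_c : pos_box c).
Hypotheses (cb : ~~ box_le c b) (bc : ~~ box_le b c).

Lemma toggle_incomparable_written p : toggle_writes b p ->
  toggle (rcons S c) (toggle S Th c xc) b xb p = toggle S Th b xb p.
Proof.
move=> wb; rewrite !toggleE; apply: toggle_with_local => //.
  move=> q rq; have nwc := incomparable_reads_unwritten cb bc rq.
  rewrite /entry mem_rcons inE.
  have -> : (q == c) = false.
    by apply/negbTE; apply: contraNneq nwc => ->; rewrite /toggle_writes eqxx.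
  by rewrite /= toggleE toggle_with_unwritten.
rewrite toggleE toggle_with_unwritten //.
exact: incomparable_reads_unwritten cb bc (toggle_writes_reads wb).
Qed.

End IncomparableToggles.

Lemma toggle_comm S Th b c xb xc p : pos_box b -> pos_box c ->
  ~~ box_le c b -> ~~ box_le b c ->
  toggle (rcons S c) (toggle S Th c xc) b xb p =
  toggle (rcons S b) (toggle S Th b xb) c xc p.
Proof.
move=> pb pc cb bc.
case wb: (toggle_writes b p).
  rewrite toggle_incomparable_written // [RHS]toggleE toggle_with_unwritten //.
  exact: incomparable_reads_unwritten cb bc (toggle_writes_reads wb).
case wc: (toggle_writes c p).
  rewrite [RHS]toggle_incomparable_written // [LHS]toggleE.
  by rewrite toggle_with_unwritten ?wb.
by rewrite !toggleE !toggle_with_unwritten ?wb ?wc // !toggleE !toggle_with_unwritten ?wb ?wc.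
Qed.

Lemma hat_aux_ext T S1 S2 Th1 Th2 bs : S1 =i S2 -> Th1 =1 Th2 ->
  hat_aux T S1 Th1 bs =1 hat_aux T S2 Th2 bs.
Proof.
elim: bs S1 S2 Th1 Th2 => [|b bs IH] S1 S2 Th1 Th2 eqS eqTh p //=.
apply: IH => q; first by rewrite !mem_rcons !inE eqS.
by rewrite !toggleE; apply: toggle_with_ext => // r; rewrite /entry eqS eqTh.
Qed.

Lemma hat_aux_move_front T S Th u b w : pos_box b -> all pos_box u ->
  {in u, forall c, ~~ box_le c b && ~~ box_le b c} ->
  hat_aux T S Th (u ++ b :: w) =1 hat_aux T S Th (b :: u ++ w).
Proof.
elim: u S Th => [|c u IH] S Th pb //= /andP [pc pu] incomp p.
rewrite IH //=; last by move=> d du; apply: incomp; rewrite inE du orbT.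
have /andP [cb bc] := incomp c (mem_head _ _).
apply: hat_aux_ext => q; first by rewrite !(mem_rcons, inE) orbCA.
exact: toggle_comm.
Qed.

(* Since [box_le] is reflexive, this forces [bs] to be duplicate-free. *)
Definition no_inversion (bs : seq box) := pairwise (fun a c => ~~ box_le c a) bs.

Lemma hat_aux_perm T bs1 bs2 S Th : all pos_box bs1 -> perm_eq bs1 bs2 ->
  no_inversion bs1 -> no_inversion bs2 ->
  hat_aux T S Th bs1 =1 hat_aux T S Th bs2.
Proof.
elim: bs1 bs2 S Th => [|b bs1 IH] bs2 S Th pos1 perm12 ninv1 ninv2.
  by rewrite perm_sym in perm12; move/perm_nilP: perm12 => ->.
have b_in2 : b \in bs2 by rewrite -(perm_mem perm12) mem_head.
case/splitPr: b_in2 ninv2 perm12 => u w ninv2 perm12.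
move: ninv1; rewrite /no_inversion pairwise_cons => /andP [b_first ninv1].
have /andP [pb pos_bs1] := pos1.
move: (ninv2); rewrite /no_inversion pairwise_cat allrel_consr.
case/and3P=> /andP [u_before_b _] _ _.
move=> p; rewrite hat_aux_move_front //; first last.
- move=> c cu; have bc := allP u_before_b c cu.
  have : c \in b :: bs1 by rewrite (perm_mem perm12) mem_cat cu.
  rewrite inE bc andbT; case: eqP bc => [-> | _ _ /(allP b_first) //].
  by rewrite /box_le !leqnn.
- by move: pos1; rewrite (perm_all _ perm12) all_cat => /andP [].
apply: IH => //.
- by rewrite -(perm_cons b) (perm_trans perm12) // -cat1s perm_catCA.
- by apply: subseq_pairwise ninv2; apply: cat_subseq => //; apply: subseq_cons.
Qed.

Section LinearExtension.

Variables (la : seq nat) (bs : seq box).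
Hypothesis ext : linear_extension la bs.

Lemma linear_extension_no_inversion : no_inversion bs.
Proof.
case: ext => _ _ ord; apply/(pairwiseP (0,0)) => s t hs ht st.
by apply/negP => /(ord _ _ ht hs); lia.
Qed.

Lemma linear_extension_pos : all pos_box bs.
Proof.
case: ext => _ mem _; apply/allP => c.
by rewrite mem => /and4P [c1 _ c2 _]; rewrite /pos_box c1 c2.
Qed.

End LinearExtension.

Lemma linear_extension_perm la bs1 bs2 :
  linear_extension la bs1 -> linear_extension la bs2 -> perm_eq bs1 bs2.
Proof.
by move=> [uniq1 mem1 _] [uniq2 mem2 _]; apply: uniq_perm => // c; rewrite mem1 mem2.
Qed.

Theorem proposition2p4 (la : seq nat) (T : box -> nat) (bs1 bs2 : seq box) :
  is_partition la ->
  linear_extension la bs1 -> linear_extension la bs2 ->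
  forall b : box, in_shape la b -> hat_along T bs1 b = hat_along T bs2 b.
Proof.
move=> _ ext1 ext2 b _; apply: hat_aux_perm.
- exact: linear_extension_pos ext1.
- exact: linear_extension_perm ext1 ext2.
- exact: linear_extension_no_inversion ext1.
- exact: linear_extension_no_inversion ext2.
Qed.
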